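(* Consider an execution of \textsf{Contagion} (described in the context) in which the sender $\sigma$ is correct and broadcasts $m$. If in this execution the underlying $pcb$ satisfies total validity (every correct process eventually $pcb$-delivers $m$) and $\sigma$ has no more than $D-\hat D$ Byzantine entries in its delivery sample, then \textsf{Contagion} satisfies validity in this execution, i.e., $\sigma$ eventually delivers $m$.
   Context: System model: a fixed set $\Pi$ of processes, some Byzantine and the rest correct, asynchronous reliable authenticated links (messages between correct processes are eventually delivered); signatures cannot be forged. $pcb$ is a probabilistic consistent broadcast instance with sender $\sigma$. \textsf{Contagion} (parameters $R,\hat R,D,\hat D$): each correct process draws a ready sample of $R$ and a delivery sample of $D$ entries, each uniformly from $\Pi$ with replacement, and sends ReadySubscribe to each, recording its own subscribers. To broadcast $m$, $\sigma$ $pcb$-broadcasts $(m,\mathrm{sign}_\sigma(m))$. Upon $pcb$-delivering a correctly signed pair, a correct process becomes ready for it and sends Ready for it to all current and future subscribers. Only correctly signed Ready messages are accepted, recorded separately for senders in the ready sample and in the delivery sample. When at least $\hat R$ members of its ready sample have sent Ready for a pair, a correct process becomes ready for it and sends Ready for it to its subscribers. A correct process delivers (at most once) the message of the first pair for which at least $\hat D$ members of its delivery sample have sent Ready. *)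

From HB Require Import structures.
From mathcomp Require Import all_boot.
Set Implicit Arguments. Unset Strict Implicit. Unset Printing Implicit Defensive.

Section Contagion.
Variables (Proc : finType) (Msg : eqType).

(* Symbolic signatures: sign_p(m) is the pair (p, m). *)
Definition Sig := (Proc * Msg)%type.
Definition sign (p : Proc) (x : Msg) : Sig := (p, x).
(* A (message, signature) pair as pcb-broadcast by the sender. *)
Definition Pair := (Msg * Sig)%type.

Inductive NetMsg := ReadySubscribe | Ready of Pair.

Definition NetMsg_enc (x : NetMsg) : option Pair :=
  if x is Ready pr then Some pr else None.
Definition NetMsg_dec (o : option Pair) : NetMsg :=
  if o is Some pr then Ready pr else ReadySubscribe.
Lemma NetMsg_encK : cancel NetMsg_enc NetMsg_dec. Proof. by case. Qed.
HB.instance Definition _ := Equality.copy NetMsg (can_type NetMsg_encK).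

Variables (correct : pred Proc) (sigma : Proc) (m : Msg)
          (R Rh D Dh : nat).

Definition valid (pr : Pair) : bool := pr.2 == sign sigma pr.1.

Record execution := Execution {
  (* ready sample and delivery sample of each process (entries, with replacement) *)
  rs : Proc -> R.-tuple Proc;
  ds : Proc -> D.-tuple Proc;
  (* send p t : messages (with destinations) sent by p at step t *)
  send : Proc -> nat -> seq (Proc * NetMsg);
  (* recv q t : the (at most one) message received by q at step t, with its
     authenticated sender *)
  recv : Proc -> nat -> option (Proc * NetMsg);
  (* pcbd p t : pair pcb-delivered by p at step t (if any) *)
  pcbd : Proc -> nat -> option Pair
}.

Variable e : execution.

Definition received_before (q p : Proc) (x : NetMsg) (t : nat) : bool :=
  has (fun t' => recv e q t' == Some (p, x)) (iota 0 t).

Definition subscriber (p q : Proc) (t : nat) : bool :=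
  received_before p q ReadySubscribe t.

(* number of entries of p's ready / delivery sample from which p has
   received Ready for pr before step t (entries counted with multiplicity) *)
Definition rcount (p : Proc) (pr : Pair) (t : nat) : nat :=
  count (fun q => received_before p q (Ready pr) t) (rs e p).
Definition dcount (p : Proc) (pr : Pair) (t : nat) : nat :=
  count (fun q => received_before p q (Ready pr) t) (ds e p).

Definition ready (p : Proc) (pr : Pair) (t : nat) : bool :=
  valid pr &&
  (has (fun t' => pcbd e p t' == Some pr) (iota 0 t.+1) || (Rh <= rcount p pr t)).

Definition reached (p : Proc) (pr : Pair) (t : nat) : bool :=
  valid pr && (Dh <= dcount p pr t).

Definition delivers (p : Proc) (m' : Msg) : Prop :=
  exists t pr, [/\ reached p pr t,
                   (forall t' pr', t' < t -> ~~ reached p pr' t') & pr.1 = m'].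

Definition is_execution : Prop :=
  (forall p q, correct p -> (q \in rs e p) || (q \in ds e p) ->
     exists t, (q, ReadySubscribe) \in send e p t) /\
  (forall p q pr t1 t2, correct p -> ready p pr t1 -> subscriber p q t2 ->
     exists t, (q, Ready pr) \in send e p t) /\
  (* reliable links between correct processes *)
  (forall p q x t, correct p -> correct q -> (q, x) \in send e p t ->
     exists t', t <= t' /\ recv e q t' = Some (p, x)) /\
  (* authenticated links: no message is attributed to a correct sender
     that it did not send *)
  (forall p q x t, correct p -> correct q -> recv e q t = Some (p, x) ->
     exists t', t' <= t /\ (q, x) \in send e p t') /\
  (* unforgeable signatures: the correct sender sigma signs only m, so every
     correctly signed pair observed by a correct process carries m *)
  (forall q t pr, correct q -> valid pr ->
     pcbd e q t = Some pr \/ (exists p, recv e q t = Some (p, Ready pr)) ->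
     pr.1 = m).

Definition pcb_total_validity : Prop :=
  forall p, correct p -> exists t, pcbd e p t = Some (m, sign sigma m).

End Contagion.

(* Every correct entry q of the sender's delivery sample receives its
   ReadySubscribe, pcb-delivers the signed pair (m, sign sigma m) by total
   validity, becomes ready and therefore sends Ready back; reliable links make
   the sender hear all of them, and since at most D - Dh entries are Byzantine
   that is at least Dh entries.  Unforgeability makes this pair the only one
   that can ever reach the delivery threshold, so it is also the first. *)
From mathcomp Require Import all_boot zify.

Set Implicit Arguments.
Unset Strict Implicit.

Lemma sub_in_count (T : eqType) (a1 a2 : pred T) (s : seq T) :
  {in s, subpred a1 a2} -> count a1 s <= count a2 s.
Proof.
move=> s12; rewrite -(@eq_in_count _ (predI a1 (mem s))) => [|x xs]; last first.
  by rewrite /= xs andbT.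
by apply: sub_count => x /andP[a1x xs]; apply: s12.
Qed.

Lemma eventually_all_in (T : eqType) (P : T -> nat -> bool) (s : seq T) :
  (forall x t t', t <= t' -> P x t -> P x t') ->
  {in s, forall x, exists t, P x t} ->
  exists t0, {in s, forall x, P x t0}.
Proof.
move=> P_mono; elim: s => [|y s IHs] Pev; first by exists 0.
have [t1 Ht1] : exists t1, {in s, forall x, P x t1}.
  by apply: IHs => x xs; apply: Pev; rewrite inE xs orbT.
have [ty Hty] := Pev y (mem_head y s).
exists (maxn ty t1) => x; rewrite inE => /predU1P[->|xs].
  by apply: P_mono Hty; rewrite leq_maxl.
by apply: P_mono (Ht1 x xs); rewrite leq_maxr.
Qed.

Section ReceivedBefore.
Variables (Proc : finType) (Msg : eqType) (R D : nat).
Variable e : execution Proc Msg R D.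

Lemma received_beforeP q p x t :
  reflect (exists2 t', t' < t & recv e q t' = Some (p, x))
          (received_before e q p x t).
Proof.
apply: (iffP hasP) => [[t'] | [t' lt_t't E]].
  by rewrite mem_iota add0n => /andP[_ lt_t't] /eqP E; exists t'.
by exists t'; rewrite ?mem_iota ?add0n ?lt_t't ?E.
Qed.

Lemma received_before_mono q p x t t' :
  t <= t' -> received_before e q p x t -> received_before e q p x t'.
Proof.
move=> le_tt' /received_beforeP[u lt_ut E]; apply/received_beforeP.
by exists u => //; apply: leq_trans le_tt'.
Qed.

End ReceivedBefore.

Lemma delivers_of_unique_reached (Proc : finType) (Msg : eqType)
    (sigma : Proc) (R D Dh : nat) (e : execution Proc Msg R D)
    (p : Proc) (pr : Pair Proc Msg) :
  (forall t pr', reached sigma Dh e p pr' t -> pr' = pr) ->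
  (exists t, reached sigma Dh e p pr t) ->
  delivers sigma Dh e p pr.1.
Proof.
move=> reached_pr reached_ev.
case: (ex_minnP reached_ev) => t reached_t t_min.
exists t, pr; split=> // t' pr' lt_t't; apply/negP => reached_t'.
move: (reached_t'); rewrite (reached_pr _ _ reached_t') => /t_min.
by rewrite leqNgt lt_t't.
Qed.

Section Contagion.
Variables (Proc : finType) (Msg : eqType) (correct : pred Proc).
Variables (sigma : Proc) (m : Msg) (R Rh D Dh : nat).
Variable e : execution Proc Msg R D.
Hypothesis exec : is_execution correct sigma m Rh e.
Hypothesis total_validity : pcb_total_validity correct sigma m e.

Lemma reached_signed_m p pr t :
  0 < Dh -> correct p -> reached sigma Dh e p pr t -> pr = (m, sign sigma m).
Proof.
case: exec => _ [_ [_ [_ unforgeable]]] Dh_gt0 cp /andP[valid_pr Dh_le].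
have : 0 < dcount e p pr t by apply: leq_trans Dh_le.
rewrite /dcount -has_count => /hasP[q _ /received_beforeP[t' _ recv_q]].
have pr1 := unforgeable p t' pr cp valid_pr (or_intror (ex_intro _ q recv_q)).
by rewrite [pr]surjective_pairing (eqP valid_pr) pr1.
Qed.

Lemma received_Ready_eventually p q :
  correct p -> correct q -> q \in ds e p ->
  exists t, received_before e p q (Ready (m, sign sigma m)) t.
Proof.
case: exec => subscribes [sends_Ready [reliable _]] cp cq q_ds.
have [t1 send_sub] := subscribes p q cp (introT orP (or_intror q_ds)).
have [t2 [_ recv_sub]] := reliable p q _ _ cp cq send_sub.
have [t3 pcbd_q] := total_validity cq.
have ready_q : ready sigma Rh e q (m, sign sigma m) t3.
  rewrite /ready /valid eqxx; apply/orP; left; apply/hasP; exists t3.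
    by rewrite mem_iota add0n ltnSn.
  by rewrite pcbd_q.
have sub_p : subscriber e q p t2.+1 by apply/received_beforeP; exists t2.
have [t4 send_Ready] := sends_Ready q p _ t3 t2.+1 cq ready_q sub_p.
have [t5 [_ recv_Ready]] := reliable q p _ _ cq cp send_Ready.
by exists t5.+1; apply/received_beforeP; exists t5.
Qed.

Lemma eventually_reached p :
  Dh <= D -> correct p -> count (fun q => ~~ correct q) (ds e p) <= D - Dh ->
  exists t, reached sigma Dh e p (m, sign sigma m) t.
Proof.
move=> Dh_le_D cp byz.
pose received_by_correct q t :=
  correct q ==> received_before e p q (Ready (m, sign sigma m)) t.
have [t all_received] : exists t, {in ds e p, forall q, received_by_correct q t}.
  apply: eventually_all_in => [q t t' le_tt'|q q_ds].
    rewrite /received_by_correct; case: (correct q) => //=.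
    exact: received_before_mono.
  case cq: (correct q); last by exists 0; rewrite /received_by_correct cq.
  have [t received_q] := received_Ready_eventually cp cq q_ds.
  by exists t; rewrite /received_by_correct cq.
exists t; rewrite /reached /valid eqxx /=.
have Dh_le_correct : Dh <= count correct (ds e p).
  have byz' : count (predC correct) (ds e p) <= D - Dh := byz.
  by have := count_predC correct (ds e p); rewrite size_tuple; lia.
apply: leq_trans Dh_le_correct _; apply: sub_in_count => q q_ds cq.
by have := all_received q q_ds; rewrite /received_by_correct cq.
Qed.

End Contagion.

Theorem lemma20 (Proc : finType) (Msg : eqType) (correct : pred Proc)
  (sigma : Proc) (m : Msg) (R Rh D Dh : nat)
  (e : execution Proc Msg R D) :
  0 < Dh <= D ->
  correct sigma ->
  is_execution correct sigma m Rh e ->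
  pcb_total_validity correct sigma m e ->
  count (fun p => ~~ correct p) (ds e sigma) <= D - Dh ->
  delivers sigma Dh e sigma m.
Proof.
move=> /andP[Dh_gt0 Dh_le_D] c_sigma exec total_validity byz.
apply: (delivers_of_unique_reached (pr := (m, sign sigma m))).
  by move=> t pr; apply: (reached_signed_m exec Dh_gt0 c_sigma).
exact: (eventually_reached exec total_validity Dh_le_D c_sigma byz).
Qed.
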